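(* Let $1\le K\le N$. Then $$\mathcal{C}_{N,K}=\mathrm{conv}\left\{R_\sigma\left(\mathcal{C}_{K,K}\oplus 0^{N-K}\right)\ :\ \sigma\in S\right\},$$ where $S\subseteq S_N$ is the set of permutations $\sigma$ of $\{1,\dots,N\}$ for which there exists a subset $\{g_1,\dots,g_K\}\subseteq\{1,\dots,N\}$ with $\sigma(i)=g_i$ for all $i=1,\dots,K$.
   Context: A behavior on $N$ input bits is a family $P=(P(a|\mathbf{x}))_{a\in\{0,1\},\mathbf{x}\in\{0,1\}^N}$ with $P(a|\mathbf{x})\ge0$ and $P(0|\mathbf{x})+P(1|\mathbf{x})=1$; the set of all behaviors is $\mathcal{L}_N\subset\mathbb{R}^{2^{N+1}}$. $\mathcal{C}_{N,K}$ is the set of $P\in\mathcal{L}_N$ for which there exist non-negative weights $q_{j_1\cdots j_K}$ summing to one, indexed by $K$-tuples of pairwise distinct indices in $\{1,\dots,N\}$, and conditional distributions $P(a|x_{j_1}\cdots x_{j_K})$ depending only on $x_{j_1},\dots,x_{j_K}$, with $P(a|\mathbf{x})=\sum q_{j_1\cdots j_K}P(a|x_{j_1}\cdots x_{j_K})$. $\mathcal{C}_{K,K}\oplus 0^{N-K}$ denotes the copy of $\mathcal{C}_{K,K}=\mathcal{L}_K$ embedded in $\mathcal{L}_N$, i.e. the set of behaviors $P\in\mathcal{L}_N$ such that $P(a|\mathbf{x})$ depends only on $x_1,\dots,x_K$ (a hypercube whose vertices are the deterministic behaviors $\delta_{a,f(\mathbf{x})}$ with $f$ depending only on $x_1,\dots,x_K$).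 For $\sigma\in S_N$, $R_\sigma$ is the linear map on behaviors given by $(R_\sigma P)(a|x_1,\dots,x_N)=P(a|x_{\sigma(1)},\dots,x_{\sigma(N)})$. $\mathrm{conv}$ denotes convex hull. *)

From mathcomp Require Import all_boot all_order all_fingroup all_algebra.
From mathcomp Require Import reals.
Set Implicit Arguments. Unset Strict Implicit. Unset Printing Implicit Defensive.
Import Order.TTheory GRing.Theory Num.Theory.
Local Open Scope ring_scope.

(* Inputs x in {0,1}^N, indices 1..N rendered as 'I_N (0-based). *)
Definition input (N : nat) := {ffun 'I_N -> bool}.

(* A vector in R^{2^{N+1}}: P (a, x) = P(a|x). *)
Definition behavior (R : realType) (N : nat) := {ffun bool * input N -> R}.

Definition is_behavior (R : realType) (N : nat) (P : behavior R N) : Prop :=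
  (forall a x, 0 <= P (a, x)) /\ (forall x, P (false, x) + P (true, x) = 1).

(* C_{N,K}: weights q indexed by K-tuples j : 'I_K -> 'I_N of pairwise distinct
   indices (injective j), conditional distributions Q j on K bits evaluated at
   (x_{j_1},...,x_{j_K}). *)
Definition CNK (R : realType) (N K : nat) (P : behavior R N) : Prop :=
  is_behavior P /\
  exists (q : {ffun 'I_K -> 'I_N} -> R) (Q : {ffun 'I_K -> 'I_N} -> behavior R K),
    (forall j, injectiveb (j : {ffun 'I_K -> 'I_N}) -> 0 <= q j) /\
    \sum_(j : {ffun 'I_K -> 'I_N} | injectiveb (j : {ffun 'I_K -> 'I_N})) q j = 1 /\
    (forall j, injectiveb (j : {ffun 'I_K -> 'I_N}) -> is_behavior (Q j)) /\
    (forall a (x : input N),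
        P (a, x) = \sum_(j : {ffun 'I_K -> 'I_N} | injectiveb (j : {ffun 'I_K -> 'I_N}))
                      q j * Q j (a, [ffun i => x (j i)])).

(* C_{K,K} (+) 0^{N-K}: behaviors in L_N depending only on x_1..x_K. *)
Definition embedKK (R : realType) (N K : nat) (P : behavior R N) : Prop :=
  is_behavior P /\
  (forall a (x y : input N),
      (forall i : 'I_N, (i < K)%N -> x i = y i) -> P (a, x) = P (a, y)).

Definition Rperm (R : realType) (N : nat) (s : {perm 'I_N}) (P : behavior R N)
  : behavior R N :=
  [ffun ax : bool * input N => P (ax.1, [ffun i => ax.2 (s i)])].

Definition Sperm (N K : nat) (s : {perm 'I_N}) : Prop :=
  exists g : 'I_K -> 'I_N, injective g /\
    forall (i : 'I_K) (j : 'I_N), nat_of_ord j = nat_of_ord i -> s j = g i.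

Definition conv (R : realType) (N : nat) (A : behavior R N -> Prop)
  (P : behavior R N) : Prop :=
  exists (n : nat) (w : 'I_n -> R) (p : 'I_n -> behavior R N),
    (forall i, 0 <= w i) /\ \sum_(i < n) w i = 1 /\ (forall i, A (p i)) /\
    (forall ax, P ax = \sum_(i < n) w i * p i ax).

Definition union_rot (R : realType) (N K : nat) (P : behavior R N) : Prop :=
  exists s : {perm 'I_N}, Sperm K s /\
    exists P0 : behavior R N, embedKK K P0 /\ P = Rperm s P0.

From mathcomp Require Import all_boot all_order all_fingroup all_algebra.
From mathcomp Require Import reals.
Set Implicit Arguments. Unset Strict Implicit. Unset Printing Implicit Defensive.
Import Order.TTheory GRing.Theory Num.Theory.
Local Open Scope ring_scope.

(* Both sides are convex hulls of "pullbacks" P(a|x) = Q(a|x_{j_1},...,x_{j_K}) of behaviors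
   Q on K bits along injective j.  For C_{N,K} this is the definition, except that there all
   terms with the same j are merged into one; this merge is a mixture of the Q's.  A rotated
   copy R_sigma(C_{K,K} + 0^{N-K}) is exactly the set of pullbacks along j = sigma restricted
   to 1..K, and every injective j arises this way since it extends to a permutation. *)

Lemma perm_extend (N K : nat) (KN : (K <= N)%N) (j : 'I_K -> 'I_N) : injective j ->
  exists s : {perm 'I_N}, forall k : 'I_K, s (widen_ord KN k) = j k.
Proof.
move=> j_inj; set A := map j (enum 'I_K).
set t := A ++ [seq x <- enum 'I_N | x \notin A].
have : perm_eq t (ord_tuple N).
  apply: uniq_perm.
  - rewrite cat_uniq map_inj_uniq // enum_uniq filter_uniq ?enum_uniq // andbT /=.
    by apply/hasPn => x; rewrite mem_filter => /andP[].
  - by rewrite val_ord_tuple enum_uniq.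
  - by move=> x; rewrite val_ord_tuple mem_cat mem_filter mem_enum /=; case: (x \in A).
(* s lists j 0, ..., j (K-1) first, then the indices outside the range of j. *)
case/tuple_permP => s t_s; exists s => k.
have := congr1 (fun u => nth (j k) u (widen_ord KN k)) t_s.
rewrite -(tnth_nth (j k) [tuple tnth (ord_tuple N) (s i) | i < N]).
rewrite tnth_mktuple tnth_ord_tuple => <- /=.
rewrite nth_cat size_map size_enum_ord ltn_ord.
by rewrite (nth_map k) ?size_enum_ord ?ltn_ord // nth_ord_enum.
Qed.

Lemma SpermT (N K : nat) (s : {perm 'I_N}) : (K <= N)%N -> Sperm K s.
Proof.
move=> KN; exists (fun k => s (widen_ord KN k)); split.
  by move=> a b /perm_inj /(congr1 val) /= /val_inj.
by move=> k m mk; congr (s _); apply: val_inj.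
Qed.

Section Behaviors.

Variable R : realType.

Definition pullback (N K : nat) (j : 'I_K -> 'I_N) (Q : behavior R K) : behavior R N :=
  [ffun ax : bool * input N => Q (ax.1, [ffun k => ax.2 (j k)])].

Definition pullbacks (N K : nat) (P : behavior R N) : Prop :=
  exists2 j : {ffun 'I_K -> 'I_N}, injectiveb j &
    exists2 Q : behavior R K, is_behavior Q & P = pullback j Q.

Definition output_true (N : nat) : behavior R N :=
  [ffun ax : bool * input N => if ax.1 then 1 else 0].

Lemma output_true_behavior (N : nat) : is_behavior (output_true N).
Proof. by split=> [[] x|x]; rewrite !ffunE /= ?ler01 ?lexx ?add0r. Qed.

Lemma pullback_behavior (N K : nat) (j : 'I_K -> 'I_N) (Q : behavior R K) :
  is_behavior Q -> is_behavior (pullback j Q).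
Proof. by case=> Q_ge0 Q_sum1; split=> *; rewrite !ffunE. Qed.

Lemma pullback_comp (N M K : nat) (f : 'I_M -> 'I_N) (g : 'I_K -> 'I_M)
    (Q : behavior R K) :
  pullback f (pullback g Q) = pullback (f \o g) Q.
Proof.
apply/ffunP=> -[a x]; rewrite !ffunE; congr (Q (a, _)).
by apply/ffunP=> k; rewrite !ffunE.
Qed.

Lemma eq_pullback (N K : nat) (f g : 'I_K -> 'I_N) (Q : behavior R K) :
  f =1 g -> pullback f Q = pullback g Q.
Proof.
move=> fg; apply/ffunP=> -[a x]; rewrite !ffunE; congr (Q (a, _)).
by apply/ffunP=> k; rewrite !ffunE fg.
Qed.

Lemma RpermE (N : nat) (s : {perm 'I_N}) (P : behavior R N) :
  Rperm s P = pullback s P.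
Proof. by []. Qed.

Section Embedding.

Variables (N K : nat) (KN : (K <= N)%N).

Definition pad (y : input K) : input N :=
  [ffun m : 'I_N => if insub (val m) is Some k then y k else false].

Lemma embedKKP (P : behavior R N) :
  embedKK K P <-> exists2 Q : behavior R K, is_behavior Q & P = pullback (widen_ord KN) Q.
Proof.
split=> [[[P_ge0 P_sum1] P_loc] | [Q Qb ->]].
  exists [ffun ay : bool * input K => P (ay.1, pad ay.2)].
    by split=> *; rewrite !ffunE.
  apply/ffunP=> -[a x]; rewrite !ffunE /=; apply: P_loc => m mK.
  by rewrite !ffunE insubT ffunE; congr (x _); apply: val_inj.
split; first exact: pullback_behavior.
move=> a x y xy; rewrite !ffunE /=; congr (Q (a, _)).
by apply/ffunP=> k; rewrite !ffunE xy /=.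
Qed.

Lemma union_rotP (P : behavior R N) : union_rot K P <-> pullbacks K P.
Proof.
split=> [[s [_ [P0 [/embedKKP[Q Qb ->] ->]]]] | [j /injectiveP j_inj [Q Qb ->]]].
  exists [ffun k => s (widen_ord KN k)].
    by apply/injectiveP=> a b; rewrite !ffunE => /perm_inj /(congr1 val) /= /val_inj.
  by exists Q; rewrite // RpermE pullback_comp; apply: eq_pullback => k; rewrite ffunE.
have [s sj] := perm_extend KN j_inj.
exists s; split; first exact: SpermT.
exists (pullback (widen_ord KN) Q); split; first by apply/embedKKP; exists Q.
by rewrite RpermE pullback_comp; apply: eq_pullback => k /=; rewrite sj.
Qed.

End Embedding.

Section Mixture.

Variables (K : nat) (I : finType) (D : pred I) (w : I -> R) (Q : I -> behavior R K).
Hypothesis w_ge0 : forall i, D i -> 0 <= w i.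

Let total := \sum_(i | D i) w i.

(* A zero total weight is sent to an arbitrary behavior. *)
Definition mixture : behavior R K :=
  if total == 0 then output_true K
  else [ffun ay => (\sum_(i | D i) w i * Q i ay) / total].

Lemma mixture_behavior : (forall i, D i -> is_behavior (Q i)) -> is_behavior mixture.
Proof.
move=> Qb; rewrite /mixture; case: eqP => [_ | /eqP t0]; first exact: output_true_behavior.
split=> [a x | x]; rewrite !ffunE.
  apply: divr_ge0; last exact: sumr_ge0.
  by apply: sumr_ge0 => i Di; rewrite mulr_ge0 ?w_ge0 //; case: (Qb i Di).
rewrite -mulrDl -big_split /= (eq_bigr w) ?divff // => i Di.
by rewrite -mulrDr; case: (Qb i Di) => _ ->; rewrite mulr1.
Qed.

Lemma mixtureE ay : total * mixture ay = \sum_(i | D i) w i * Q i ay.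
Proof.
rewrite /mixture; case: eqP => [t0 | /eqP t0]; last by rewrite ffunE mulrC divfK.
rewrite t0 mul0r; apply/esym/big1 => i Di.
by have /psumr_eq0P -> := t0; rewrite ?mul0r.
Qed.

End Mixture.

Section Convex.

Variable N : nat.
Implicit Types (A B : behavior R N -> Prop) (P : behavior R N).

Lemma conv_fin A P (I : finType) (D : pred I) (w : I -> R) (p : I -> behavior R N) :
  (forall i, D i -> 0 <= w i) -> \sum_(i | D i) w i = 1 ->
  (forall i, D i -> A (p i)) ->
  (forall ax, P ax = \sum_(i | D i) w i * p i ax) -> conv A P.
Proof.
move=> w_ge0 w_sum1 Ap Pp.
exists #|D|, (fun k => w (enum_val k)), (fun k => p (enum_val k)).
split; [|split; [|split]].
- by move=> k; apply/w_ge0/enum_valP.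
- by rewrite -big_enum_val.
- by move=> k; apply/Ap/enum_valP.
- by move=> ax; rewrite Pp big_enum_val.
Qed.

Lemma sub_conv A B P : (forall P', A P' -> B P') -> conv A P -> conv B P.
Proof.
move=> AB [n [w [p [w_ge0 [w_sum1 [Ap Pp]]]]]].
exists n, w, p; split; [|split; [|split]] => //.
by move=> i; apply/AB/Ap.
Qed.

Lemma conv_behavior A P : (forall P', A P' -> is_behavior P') -> conv A P -> is_behavior P.
Proof.
move=> Ab [n [w [p [w_ge0 [w_sum1 [Ap Pp]]]]]].
split=> [a x | x]; rewrite !Pp.
  by apply: sumr_ge0 => i _; rewrite mulr_ge0 //; case: (Ab _ (Ap i)).
rewrite -big_split -w_sum1 /=; apply: eq_bigr => i _.
by rewrite -mulrDr; case: (Ab _ (Ap i)) => _ ->; rewrite mulr1.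
Qed.

End Convex.

Lemma CNK_conv_pullbacks (N K : nat) (P : behavior R N) :
  CNK K P -> conv (@pullbacks N K) P.
Proof.
case=> _ [q [Q [q_ge0 [q_sum1 [Qb PQ]]]]].
apply: (conv_fin (D := fun j : {ffun 'I_K -> 'I_N} => injectiveb j) (w := q)
  (p := fun j => pullback j (Q j))) => //.
  by move=> j j_inj; exists j => //; exists (Q j) => //; apply: Qb.
by case=> a x; rewrite PQ; apply: eq_bigr => j _; rewrite ffunE.
Qed.

Lemma conv_pullbacks_CNK (N K : nat) (P : behavior R N) :
  conv (@pullbacks N K) P -> CNK K P.
Proof.
move=> convP; split.
  by apply: conv_behavior convP => P' [j _ [Q Qb ->]]; apply: pullback_behavior.
case: convP => n [w [p [w_ge0 [w_sum1 [pb Pp]]]]].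
have /fin_all_exists[jQ jQP] : forall i, exists jQ : {ffun 'I_K -> 'I_N} * behavior R K,
    [/\ injectiveb jQ.1, is_behavior jQ.2 & p i = pullback jQ.1 jQ.2].
  by move=> i; have [j j_inj [Q Qb pi]] := pb i; exists (j, Q).
pose q j := \sum_(i < n | (jQ i).1 == j) w i.
pose Q j := mixture (fun i => (jQ i).1 == j) w (fun i => (jQ i).2).
have regroup (F : 'I_n -> R) : \sum_i F i =
    \sum_(j : {ffun 'I_K -> 'I_N} | injectiveb j) \sum_(i < n | (jQ i).1 == j) F i.
  by apply: partition_big => i _; case: (jQP i).
exists q, Q; split; first by move=> j _; apply: sumr_ge0.
split; first by rewrite -w_sum1 regroup.
split.
  move=> j _; apply: mixture_behavior => [i _ | i _]; first exact: w_ge0.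
  by case: (jQP i).
move=> a x; rewrite Pp regroup; apply: eq_bigr => j _.
rewrite mixtureE //; apply: eq_bigr => i /eqP ji.
by case: (jQP i) => _ _ ->; rewrite ffunE ji.
Qed.

End Behaviors.

Theorem lemma1 (R : realType) (N K : nat) :
  (1 <= K)%N -> (K <= N)%N ->
  forall P : behavior R N, CNK K P <-> conv (union_rot K) P.
Proof.
(* The statement also holds for K = 0, where both sides are the constant behaviors. *)
move=> _ KN P; split=> [/CNK_conv_pullbacks | convP].
  by apply: sub_conv => P' /(union_rotP KN).
by apply/conv_pullbacks_CNK/(sub_conv _ convP) => P' /(union_rotP KN).
Qed.
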